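(* Let $n\geq 13$ be an integer with $n\not\equiv 2\pmod 3$. If $f:V(C_n)\to\{-1,1,2\}$ is any function with $\sum_{v\in V(C_n)}f(v)=1$, then there exists a vertex $y\in V(C_n)$ such that $\sum_{z\in N_{C_n}[y]}f(z)<0$.
   Context: $C_n$ denotes the cycle on $n$ vertices, and for a vertex $y$ of $C_n$, $N_{C_n}[y]$ is the closed neighborhood of $y$ in $C_n$, i.e. $y$ together with its two neighbors on the cycle. *)

From mathcomp Require Import all_boot all_order all_algebra.
Set Implicit Arguments. Unset Strict Implicit. Unset Printing Implicit Defensive.
Import Order.TTheory GRing.Theory Num.Theory.

(* The cycle C_n on vertex set 'I_n: i ~ j iff j = i+1 mod n or i = j+1 mod n
   (intended for n >= 3). *)
Definition cycle_adj (n : nat) (i j : 'I_n) : bool :=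
  (j == (i.+1 %% n) :> nat) || (i == (j.+1 %% n) :> nat).

Definition closed_nbhd (n : nat) (y : 'I_n) : {set 'I_n} :=
  [set z | (z == y) || cycle_adj z y].

From mathcomp Require Import all_boot all_order all_algebra zify.
Import Order.TTheory GRing.Theory Num.Theory.
Local Open Scope ring_scope.

(* Suppose every closed neighbourhood sum is nonnegative. Each vertex lies in
   three closed neighbourhoods, so these sums add up to 3. If f never takes
   the value 1 then f = 3 [f = 2] - 1 and the total 1 forces n = 2 (mod 3);
   hence some vertex has value 1, and the five closed neighbourhoods around it
   already sum to more than 3 whatever the values -1, 1, 2 of the neighbouring
   vertices. *)

Section CycleWalk.

Variable n : nat.

Lemma val_iter_ordS (x : 'I_n) k : val (iter k (@ordS n) x) = ((x + k) %% n)%N.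
Proof.
elim: k => [|k IHk] /=; first by rewrite addn0 modn_small.
by rewrite IHk /= -addn1 modnDml addn1 addnS.
Qed.

Lemma iter_ordS_inj (x : 'I_n) a b : (a < n)%N -> (b < n)%N ->
  iter a (@ordS n) x = iter b (@ordS n) x -> a = b.
Proof.
move=> an bn /(congr1 val)/eqP; rewrite !val_iter_ordS eqn_modDl.
by rewrite !modn_small // => /eqP.
Qed.

Lemma closed_nbhdE (y : 'I_n) : closed_nbhd y = [set ord_pred y; y; ordS y].
Proof.
apply/setP => z; rewrite !inE /cycle_adj.
have -> : (z == ord_pred y) = (y == (z.+1 %% n)%N :> nat).
  by rewrite -(inj_eq (@ordS_inj n)) ord_predK eq_sym -val_eqE.
have -> : (z == ordS y) = (z == (y.+1 %% n)%N :> nat) by rewrite -val_eqE.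
by case: (z == y); case: (_ == _); case: (_ == _).
Qed.

Lemma sum_closed_nbhd (V : nmodType) (f : 'I_n -> V) (y : 'I_n) :
  (3 <= n)%N -> \sum_(z in closed_nbhd y) f z = f (ord_pred y) + f y + f (ordS y).
Proof.
move=> n3; have neq a b : (a < 3)%N -> (b < 3)%N -> a != b ->
    iter a (@ordS n) y != iter b (@ordS n) y.
  by move=> a3 b3; apply: contra_neq => /iter_ordS_inj; apply; lia.
have predS z : (ord_pred y == z) = (y == ordS z).
  by rewrite -(inj_eq (@ordS_inj n)) ord_predK.
rewrite closed_nbhdE -setUA !big_setU1 ?big_set1 /= ?addrA // !inE.
- by rewrite eq_sym (neq 1%N 0%N).
- by rewrite negb_or !predS (neq 0%N 1%N) ?(neq 0%N 2%N).
Qed.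

Lemma sum_windows (V : nmodType) (f : 'I_n -> V) :
  \sum_y (f y + f (ordS y) + f (ordS (ordS y))) = (\sum_y f y) *+ 3.
Proof.
have shift (g : 'I_n -> V) : \sum_y g (ordS y) = \sum_y g y.
  by rewrite [RHS](reindex_inj (@ordS_inj n)).
rewrite !big_split /= (shift f) (shift (fun y => f (ordS y))) (shift f).
by rewrite mulrS mulr2n addrA.
Qed.

Lemma sum_walk_le (R : numDomainType) (W : 'I_n -> R) (x : 'I_n) m :
  (m <= n)%N -> (forall y, 0 <= W y) ->
  \sum_(k < m) W (iter k (@ordS n) x) <= \sum_y W y.
Proof.
move=> mn W_ge0; rewrite -big_imset /=; last first.
  move=> a b _ _ /iter_ordS_inj eq_ab.
  by apply/val_inj/eq_ab; exact: leq_trans (ltn_ord _) mn.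
rewrite [leRHS](bigID (mem [set iter k (@ordS n) x | k : 'I_m])) /=.
by rewrite lerDl sumr_ge0.
Qed.

Lemma sum_neg1_2_mod3 (f : 'I_n -> int) :
  (forall v, f v \in [:: -1; 2]) -> \sum_v f v = 1 -> (n %% 3 = 2)%N.
Proof.
move=> f_val; have fE v : f v = 3 * ((f v == 2) : nat)%:Z - 1.
  by have := f_val v; rewrite !inE => /orP[] /eqP ->.
rewrite (eq_bigr _ (fun v _ => fE v)) sumrB -mulr_sumr sumr_const card_ord.
move: (\sum_(v < n) _) => k; lia.
Qed.

End CycleWalk.

Lemma five_windows_around_one (a b d e g h : int) :
  a \in [:: -1; 1; 2] -> b \in [:: -1; 1; 2] -> d \in [:: -1; 1; 2] ->
  e \in [:: -1; 1; 2] -> g \in [:: -1; 1; 2] -> h \in [:: -1; 1; 2] ->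
  0 <= a + b + 1 -> 0 <= b + 1 + d -> 0 <= 1 + d + e -> 0 <= d + e + g ->
  0 <= e + g + h ->
  3 < (a + b + 1) + (b + 1 + d) + (1 + d + e) + (d + e + g) + (e + g + h).
Proof. by rewrite !inE; do 6![case/or3P=> /eqP->]; lia. Qed.

Theorem mainTheorem9 (n : nat) (hn : (13 <= n)%N) (hmod : (n %% 3 != 2)%N)
  (f : 'I_n -> int)
  (hf : forall v : 'I_n, f v \in [:: -1; 1; 2])
  (hsum : \sum_(v : 'I_n) f v = 1) :
  exists y : 'I_n, \sum_(z in closed_nbhd y) f z < 0.
Proof.
have n5 : (5 <= n)%N by apply: leq_trans hn.
apply/existsP; apply: contraT; rewrite negb_exists => /forallP nbhd_ge0.
pose W y := f y + f (ordS y) + f (ordS (ordS y)).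
have W_ge0 y : 0 <= W y.
  by have := nbhd_ge0 (ordS y); rewrite sum_closed_nbhd ?ordSK -?leNgt //; lia.
have [j /eqP fj1 | f_ne1] := pickP (fun v => f v == 1); last first.
  suff /eqP : (n %% 3 = 2)%N by rewrite (negbTE hmod).
  apply: (@sum_neg1_2_mod3 n f _ hsum) => v.
  by have := hf v; have := f_ne1 v; rewrite !inE => /= ->.
pose x := ord_pred (ord_pred j).
have ssx : ordS (ordS x) = j by rewrite !ord_predK.
have := @sum_walk_le n _ W x 5 n5 W_ge0.
have := W_ge0 x; have := W_ge0 (ordS x); have := W_ge0 (ordS (ordS x)).
have := W_ge0 (ordS (ordS (ordS x))); have := W_ge0 (ordS (ordS (ordS (ordS x)))).
rewrite sum_windows hsum !big_ord_recr big_ord0 /= add0r /W /= ssx fj1.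
move=> w4 w3 w2 w1 w0.
by rewrite leNgt five_windows_around_one ?hf.
Qed.
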